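(* Let $\omega>0$ and consider the saturated oscillator $\dot x=A_0x-B\,\mathrm{sat}(Kx)$ with $x\in\mathbb{R}^2$, $A_0=\begin{bmatrix}0&\omega\\-\omega&0\end{bmatrix}$, $B=\begin{bmatrix}0\\ \omega\end{bmatrix}$, $K=[k_1\ k_2]$. The origin is globally asymptotically stable if and only if $k_1>-1$ and $k_2>0$.
   Context: $\mathrm{sat}(s)=\min\{\overline{u},\max\{-\underline{u},s\}\}$ with $\overline{u},\underline{u}>0$. *)

From Stdlib Require Import Reals.
From Coquelicot Require Import Coquelicot.
Open Scope R_scope.

Definition sat (ubar ulow s : R) : R := Rmin ubar (Rmax (- ulow) s).

Definition norm2 (a b : R) : R := sqrt (a ^ 2 + b ^ 2).

(* (x1, x2) is a solution of  xdot = A0 x - B sat(K x),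
   A0 = [[0, w], [-w, 0]], B = [0; w], K = [k1 k2]:
     x1' = w x2
     x2' = -w x1 - w sat(k1 x1 + k2 x2). *)
Definition is_solution (w k1 k2 ubar ulow : R) (x1 x2 : R -> R) : Prop :=
  forall t : R,
    is_derive x1 t (w * x2 t) /\
    is_derive x2 t (- w * x1 t - w * sat ubar ulow (k1 * x1 t + k2 * x2 t)).

Definition GAS (w k1 k2 ubar ulow : R) : Prop :=
  (forall eps : R, 0 < eps -> exists delta : R, 0 < delta /\
     forall x1 x2 : R -> R, is_solution w k1 k2 ubar ulow x1 x2 ->
       norm2 (x1 0) (x2 0) < delta ->
       forall t : R, 0 <= t -> norm2 (x1 t) (x2 t) < eps)
  /\
  (forall x1 x2 : R -> R, is_solution w k1 k2 ubar ulow x1 x2 ->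
     is_lim x1 p_infty 0 /\ is_lim x2 p_infty 0).

From Stdlib Require Import Reals Lra Lia Factorial ClassicalEpsilon.
From Coquelicot Require Import Coquelicot.
Open Scope R_scope.

(* Sufficiency rests on the Lyapunov function
     V x = x2^2 / 2 + int_0^x1 (p + sat (k1 p)) dp,
   whose derivative along solutions is - w x2 (sat (k1 x1 + k2 x2) - sat (k1 x1)): as [sat] is
   nondecreasing, it has the sign of [- k2].  For [k1 > -1], V is squeezed between two positive
   definite quadratic forms, which gives stability.  For attractivity (LaSalle), V decreases to a
   limit [l]; the solution through an omega-limit point (solutions exist because the vector field
   is globally Lipschitz) stays on the level set [V = l] by continuous dependence.  There
   [sat (k1 x1 + k2 x2) = sat (k1 x1)]; if [l > 0] this keeps the feedback saturated, so [x1] has a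
   constant sign and [x2] drifts off linearly, contradicting the boundedness of the level set.
   Necessity: for [k1 <= -1] the point [(ulow, 0)] is an equilibrium, and for [k2 <= 0] V never
   decreases, so the solution from [(0, 1)] cannot tend to 0. *)

Ltac derive_as l :=
  match goal with |- is_derive ?f ?x ?l0 =>
    refine (eq_ind l (is_derive f x) _ l0 _); [ | field] end.

Ltac derive_rules :=
  repeat match goal with
  | |- is_derive (fun x => x) _ _ => apply (@is_derive_id R_AbsRing)
  | |- is_derive (fun _ => ?c) _ _ => apply (@is_derive_const R_AbsRing R_NormedModule)
  | |- is_derive (fun _ => _ - _) _ _ => apply (@is_derive_minus R_AbsRing R_NormedModule)
  | |- is_derive (fun _ => _ + _) _ _ => apply (@is_derive_plus R_AbsRing R_NormedModule)
  | |- is_derive (fun _ => - _) _ _ => apply (@is_derive_opp R_AbsRing R_NormedModule)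
  | |- is_derive (fun _ => ?k * _) _ _ => apply is_derive_scal
  | |- is_derive (Rmult _) _ _ => apply (is_derive_scal (fun x => x))
  | |- is_derive (fun _ => _ * _) _ _ =>
      apply (@is_derive_mult R_AbsRing); [ | | exact Rmult_comm]
  | |- is_derive _ _ _ => assumption
  end.

Lemma is_derive_continuity_pt (f : R -> R) x l : is_derive f x l -> continuity_pt f x.
Proof.
  intros H. apply continuity_pt_filterlim.
  apply (@ex_derive_continuous R_AbsRing R_NormedModule). now exists l.
Qed.

Lemma continuity_pt_eps (f : R -> R) x : continuity_pt f x ->
  forall eps, 0 < eps -> exists d, 0 < d /\ forall y, Rabs (y - x) < d -> Rabs (f y - f x) < eps.
Proof.
  intros H eps He.
  destruct (proj1 (continuity_pt_locally f x) H (mkposreal eps He)) as [d Hd].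
  exists d. split; [apply cond_pos | exact Hd].
Qed.

Lemma continuity_pt_of_eps (f : R -> R) x :
  (forall eps, 0 < eps -> exists d, 0 < d /\ forall y, Rabs (y - x) < d -> Rabs (f y - f x) < eps) ->
  continuity_pt f x.
Proof.
  intros H. apply continuity_pt_locally. intros eps.
  destruct (H eps (cond_pos eps)) as [d [Hd Hy]]. now exists (mkposreal d Hd).
Qed.

Lemma le_of_is_derive_nonpos (q dq : R -> R) a b : a <= b ->
  (forall x, a <= x <= b -> is_derive q x (dq x)) ->
  (forall x, a <= x <= b -> dq x <= 0) -> q b <= q a.
Proof.
  intros Hab Hd Hn. destruct (Req_dec a b) as [<- | Hne]; [lra |].
  destruct (MVT_gen q a b dq) as [c [Hc Heq]];
    rewrite ?Rmin_left, ?Rmax_right in * by lra.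
  - intros x Hx. apply Hd. lra.
  - intros x Hx. apply (is_derive_continuity_pt q x (dq x)), Hd, Hx.
  - specialize (Hn c Hc). nra.
Qed.

Lemma le_of_is_derive_nonneg (q dq : R -> R) a b : a <= b ->
  (forall x, a <= x <= b -> is_derive q x (dq x)) ->
  (forall x, a <= x <= b -> 0 <= dq x) -> q a <= q b.
Proof.
  intros Hab Hd Hn.
  enough (- q b <= - q a) by lra.
  apply (le_of_is_derive_nonpos (fun t => - q t) (fun t => - dq t) a b Hab).
  - intros x Hx. now apply (@is_derive_opp R_AbsRing R_NormedModule), Hd.
  - intros x Hx. specialize (Hn x Hx). lra.
Qed.

Lemma min_at_0_of_is_derive (h dh : R -> R) : (forall r, is_derive h r (dh r)) ->
  (forall r, 0 <= r -> 0 <= dh r) -> (forall r, r <= 0 -> dh r <= 0) -> forall r, h 0 <= h r.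
Proof.
  intros Hd Hp Hn r. destruct (Rle_dec 0 r).
  - apply (le_of_is_derive_nonneg h dh); auto. intros x Hx. apply Hp. lra.
  - apply (le_of_is_derive_nonpos h dh); auto; [lra |]. intros x Hx. apply Hn. lra.
Qed.

Lemma Gronwall_abs (D dD : R -> R) c : 0 <= c -> (forall s, is_derive D s (dD s)) ->
  (forall s, Rabs (dD s) <= c * D s) -> forall s, D s <= exp (c * Rabs s) * D 0.
Proof.
  intros Hc Hd Hb s.
  assert (Dexp : forall a u, is_derive (fun u => exp (a * u)) u (a * exp (a * u))).
  { intros a u. derive_as (a * 1 * exp (a * u)).
    apply (is_derive_comp exp (fun u => a * u)); [apply is_derive_exp | derive_rules]. }
  (* the weight exp(-c|u|) times D is monotone on each side of 0 *)
  set (e := if Rle_dec 0 s then - c else c).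
  assert (Hmon : exp (e * s) * D s <= D 0).
  { assert (D0 : exp (e * 0) * D 0 = D 0) by (rewrite Rmult_0_r, exp_0; ring).
    rewrite <- D0. unfold e. destruct (Rle_dec 0 s).
    - apply (le_of_is_derive_nonpos (fun u => exp (- c * u) * D u)
        (fun u => - c * exp (- c * u) * D u + exp (- c * u) * dD u)); auto.
      + intros x _. apply (is_derive_mult (fun u => exp (- c * u)) D); auto. exact Rmult_comm.
      + intros x _. pose proof (exp_pos (- c * x)). pose proof (proj1 (Rabs_le_between _ _) (Hb x)). nra.
    - apply (le_of_is_derive_nonneg (fun u => exp (c * u) * D u)
        (fun u => c * exp (c * u) * D u + exp (c * u) * dD u)); [lra | |].
      + intros x _. apply (is_derive_mult (fun u => exp (c * u)) D); auto. exact Rmult_comm.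
      + intros x _. pose proof (exp_pos (c * x)). pose proof (proj1 (Rabs_le_between _ _) (Hb x)). nra. }
  assert (Hw : exp (c * Rabs s) * exp (e * s) = 1).
  { rewrite <- exp_plus, <- exp_0. f_equal. unfold e, Rabs.
    destruct (Rle_dec 0 s), (Rcase_abs s); first [ring | lra]. }
  pose proof (exp_pos (c * Rabs s)).
  apply (Rmult_le_compat_l (exp (c * Rabs s))) in Hmon; [| lra].
  rewrite <- Rmult_assoc, Hw, Rmult_1_l in Hmon. exact Hmon.
Qed.

Lemma ex_RInt_continuity (g : R -> R) a b : (forall s, continuity_pt g s) -> ex_RInt g a b.
Proof.
  intros Hg. apply (@ex_RInt_continuous R_CompleteNormedModule).
  intros z _. now apply continuity_pt_filterlim.
Qed.

Lemma is_derive_plus_RInt_0 (c : R) (g : R -> R) t : (forall s, continuity_pt g s) ->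
  is_derive (fun t => c + RInt g 0 t) t (g t).
Proof.
  intros Hg. derive_as (0 + g t). derive_rules.
  apply (is_derive_RInt g (RInt g 0) 0 t).
  - apply filter_forall. intros b.
    apply (@RInt_correct R_CompleteNormedModule), ex_RInt_continuity, Hg.
  - now apply continuity_pt_filterlim.
Qed.

Lemma abs_RInt_0_le (g : R -> R) t M : (forall s, continuity_pt g s) ->
  (forall s, Rabs s <= Rabs t -> Rabs (g s) <= M) -> Rabs (RInt g 0 t) <= Rabs t * M.
Proof.
  intros Hg HM. destruct (Rle_dec 0 t) as [Ht | Ht].
  - replace (Rabs t * M) with ((t - 0) * M) by (rewrite Rabs_pos_eq; lra).
    apply abs_RInt_le_const; [lra | now apply ex_RInt_continuity |].
    intros s Hs. apply HM. rewrite !Rabs_pos_eq; lra.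
  - rewrite <- (opp_RInt_swap g t 0) by now apply ex_RInt_continuity.
    change (Rabs (- RInt g t 0) <= Rabs t * M).
    rewrite Rabs_Ropp. replace (Rabs t * M) with ((0 - t) * M) by (rewrite Rabs_left; lra).
    apply abs_RInt_le_const; [lra | now apply ex_RInt_continuity |].
    intros s Hs. apply HM. rewrite !Rabs_left1; lra.
Qed.

Lemma is_derive_pow_fact (K : R) (m : nat) u :
  is_derive (fun u => K * u ^ S m / INR (fact (S m))) u (K * u ^ m / INR (fact m)).
Proof.
  assert (Hm : INR (S m) <> 0) by (apply not_0_INR; lia).
  pose proof (INR_fact_neq_0 m).
  apply (is_derive_ext (fun u => K / INR (fact (S m)) * u ^ S m)); [intros t; simpl; unfold Rdiv; ring |].
  refine (eq_ind (K / INR (fact (S m)) * (INR (S m) * 1 * u ^ m)) (is_derive _ u) _ _ _).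
  - apply is_derive_scal, (is_derive_pow (fun u => u) (S m) u 1), (@is_derive_id R_AbsRing).
  - rewrite fact_simpl, mult_INR. field. auto.
Qed.

Lemma abs_le_of_is_derive_pow_fact_nonneg (h dh : R -> R) (K : R) (m : nat) t : 0 <= t ->
  h 0 = 0 -> (forall s, is_derive h s (dh s)) ->
  (forall s, 0 <= s <= t -> Rabs (dh s) <= K * s ^ m / INR (fact m)) ->
  Rabs (h t) <= K * t ^ S m / INR (fact (S m)).
Proof.
  intros Ht H0 Hd Hb.
  set (Phi := fun u => K * u ^ S m / INR (fact (S m))).
  assert (P0 : Phi 0 = 0) by (unfold Phi; simpl; unfold Rdiv; ring).
  assert (Up : h t - Phi t <= h 0 - Phi 0).
  { apply (le_of_is_derive_nonpos (fun u => h u - Phi u)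
      (fun u => dh u - K * u ^ m / INR (fact m)) 0 t Ht).
    - intros x _. apply (is_derive_minus h Phi); [apply Hd | apply is_derive_pow_fact].
    - intros x Hx. pose proof (proj1 (Rabs_le_between _ _) (Hb x Hx)). lra. }
  assert (Low : - h t - Phi t <= - h 0 - Phi 0).
  { apply (le_of_is_derive_nonpos (fun u => - h u - Phi u)
      (fun u => - dh u - K * u ^ m / INR (fact m)) 0 t Ht).
    - intros x _. apply (is_derive_minus (fun u => - h u) Phi); [| apply is_derive_pow_fact].
      apply (@is_derive_opp R_AbsRing R_NormedModule), Hd.
    - intros x Hx. pose proof (proj1 (Rabs_le_between _ _) (Hb x Hx)). lra. }
  apply Rabs_le. unfold Phi in *. lra.
Qed.

Lemma abs_le_of_is_derive_pow_fact (h dh : R -> R) (K : R) (m : nat) t : h 0 = 0 ->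
  (forall s, is_derive h s (dh s)) ->
  (forall s, Rabs (dh s) <= K * Rabs s ^ m / INR (fact m)) ->
  Rabs (h t) <= K * Rabs t ^ S m / INR (fact (S m)).
Proof.
  intros H0 Hd Hb. destruct (Rle_dec 0 t) as [Ht | Ht].
  - rewrite (Rabs_pos_eq t) by lra. apply (abs_le_of_is_derive_pow_fact_nonneg h dh); auto.
    intros s Hs. specialize (Hb s). now rewrite (Rabs_pos_eq s) in Hb by lra.
  - rewrite (Rabs_left t) by lra. replace (h t) with (h (- - t)) by (f_equal; ring).
    apply (abs_le_of_is_derive_pow_fact_nonneg (fun u => h (- u)) (fun u => - dh (- u)));
      [lra | now rewrite Ropp_0 | |].
    + intros s. derive_as (-1 * dh (- s)).
      apply (is_derive_comp h (fun u => - u)); [apply Hd |].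
      apply (@is_derive_opp R_AbsRing R_NormedModule), (@is_derive_id R_AbsRing).
    + intros s Hs. specialize (Hb (- s)). rewrite Rabs_Ropp. now rewrite (Rabs_Ropp s), (Rabs_pos_eq s) in Hb by lra.
Qed.

Lemma nonincreasing_nonneg_limit (W : R -> R) : (forall t, 0 <= W t) ->
  (forall t1 t2, t1 <= t2 -> W t2 <= W t1) ->
  exists l, 0 <= l /\ (forall t, l <= W t) /\
    (forall eps, 0 < eps -> exists T, forall t, T <= t -> W t < l + eps).
Proof.
  intros Wpos Wdec.
  assert (Hg : Un_growing (fun n => - W (INR n))).
  { intros n. pose proof (Wdec (INR n) (INR (S n)) ltac:(rewrite S_INR; lra)). lra. }
  destruct (growing_cv _ Hg) as [l Hl].
  { exists 0. intros x [i ->]. pose proof (Wpos (INR i)). lra. }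
  pose proof (growing_ineq _ l Hg Hl) as Hub.
  exists (- l). split; [| split].
  - destruct (Rle_dec l 0); [lra |]. destruct (Hl l ltac:(lra)) as [N HN].
    specialize (HN N (le_n _)). unfold R_dist in HN. apply Rabs_def2 in HN.
    pose proof (Wpos (INR N)). lra.
  - intros t. destruct (INR_unbounded t) as [n Hn].
    pose proof (Hub n). pose proof (Wdec t (INR n) ltac:(lra)). lra.
  - intros eps He. destruct (Hl eps He) as [N HN]. exists (INR N). intros t Ht.
    specialize (HN N (le_n _)). unfold R_dist in HN. apply Rabs_def2 in HN.
    pose proof (Wdec _ _ Ht). lra.
Qed.

Lemma pos_of_continuous_nonvanishing (z : R -> R) : continuity z -> (forall s, z s <> 0) ->
  0 < z 0 -> forall s, 0 <= s -> 0 < z s.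
Proof.
  intros Hc Hnz H0 s Hs. destruct (Rlt_dec 0 (z s)) as [Q | Q]; [exact Q |]. exfalso.
  assert (Q' : z s < 0) by (pose proof (Hnz s); lra).
  destruct (Req_dec s 0) as [-> | Hs0]; [lra |].
  destruct (IVT (fun u => - z u) 0 s) as [u [_ Hzu]]; [| lra | lra | lra |].
  - intros x. now apply continuity_pt_opp.
  - apply (Hnz u). lra.
Qed.

Lemma Rabs_mult_self x : Rabs x * Rabs x = x * x.
Proof. rewrite <- Rabs_mult. apply Rabs_pos_eq, Rle_0_sqr. Qed.

Lemma Rabs_lt_of_sqr_lt x e : 0 < e -> x * x < e * e -> Rabs x < e.
Proof. intros He H. apply Rabs_def1; nra. Qed.

Lemma is_lim_pinfty_0_iff (f : R -> R) : is_lim f p_infty 0 <->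
  forall eps, 0 < eps -> exists T, forall t, T < t -> Rabs (f t) < eps.
Proof.
  rewrite <- is_lim_spec. split.
  - intros H eps He. destruct (H (mkposreal eps He)) as [T HT].
    exists T. intros t Ht. specialize (HT t Ht). simpl in HT. now rewrite Rminus_0_r in HT.
  - intros H eps. destruct (H eps (cond_pos eps)) as [T HT].
    exists T. intros t Ht. rewrite Rminus_0_r. auto.
Qed.

Lemma halving_steps_tail (Q b : nat -> R) (N : nat) :
  (forall k, (N <= k)%nat -> Rabs (Q (S k) - Q k) <= b k) ->
  (forall k, (N <= k)%nat -> b (S k) <= b k / 2) ->
  forall n j, (N <= n)%nat -> Rabs (Q (n + j)%nat - Q n) + 2 * b (n + j)%nat <= 2 * b n.
Proof.
  intros HQ Hb n j Hn. induction j as [| j IH].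
  - rewrite Nat.add_0_r, Rminus_diag, Rabs_R0. lra.
  - rewrite Nat.add_succ_r.
    pose proof (HQ (n + j)%nat ltac:(lia)). pose proof (Hb (n + j)%nat ltac:(lia)).
    pose proof (Rabs_triang (Q (S (n + j)) - Q (n + j)%nat) (Q (n + j)%nat - Q n)).
    replace (Q (S (n + j)) - Q (n + j)%nat + (Q (n + j)%nat - Q n))
      with (Q (S (n + j)) - Q n) in * by ring.
    lra.
Qed.

Lemma is_lim_seq_of_halving_steps (Q b : nat -> R) (N : nat) : (forall k, 0 <= b k) ->
  (forall k, (N <= k)%nat -> Rabs (Q (S k) - Q k) <= b k) ->
  (forall k, (N <= k)%nat -> b (S k) <= b k / 2) -> is_lim_seq b 0 ->
  is_lim_seq Q (real (Lim_seq Q)) /\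
  forall n, (N <= n)%nat -> Rabs (real (Lim_seq Q) - Q n) <= 2 * b n.
Proof.
  intros Hb0 HQ Hb Hcv.
  assert (Tail : forall n m, (N <= n)%nat -> (n <= m)%nat -> Rabs (Q m - Q n) <= 2 * b n).
  { intros n m Hn Hm. replace m with (n + (m - n))%nat by lia.
    pose proof (halving_steps_tail Q b N HQ Hb n (m - n) Hn).
    pose proof (Hb0 (n + (m - n))%nat). lra. }
  assert (Hlim : is_lim_seq Q (real (Lim_seq Q))).
  { apply Lim_seq_correct', ex_lim_seq_cauchy_corr. intros eps.
    assert (He : 0 < eps / 4) by (pose proof (cond_pos eps); lra).
    destruct (proj2 (is_lim_seq_spec _ _) Hcv (mkposreal _ He)) as [M HM].
    exists (N + M)%nat. intros n m Hn Hm.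
    specialize (HM (N + M)%nat ltac:(lia)). simpl in HM.
    rewrite Rminus_0_r, Rabs_pos_eq in HM by auto.
    pose proof (Tail (N + M)%nat n ltac:(lia) Hn). pose proof (Tail (N + M)%nat m ltac:(lia) Hm).
    pose proof (Rabs_triang (Q n - Q (N + M)%nat) (- (Q m - Q (N + M)%nat))).
    rewrite Rabs_Ropp in *.
    replace (Q n - Q (N + M)%nat + - (Q m - Q (N + M)%nat)) with (Q n - Q m) in * by ring.
    lra. }
  split; [exact Hlim |].
  intros n Hn. apply le_epsilon. intros eps He.
  destruct (proj2 (is_lim_seq_spec _ _) Hlim (mkposreal eps He)) as [M HM]. simpl in HM.
  specialize (HM (n + M)%nat ltac:(lia)). pose proof (Tail n (n + M)%nat Hn ltac:(lia)).
  pose proof (Rabs_triang (- (Q (n + M)%nat - real (Lim_seq Q))) (Q (n + M)%nat - Q n)).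
  rewrite Rabs_Ropp in *.
  replace (- (Q (n + M)%nat - real (Lim_seq Q)) + (Q (n + M)%nat - Q n))
    with (real (Lim_seq Q) - Q n) in * by ring.
  lra.
Qed.

Definition pow_over_fact (A : R) (n : nat) : R := A ^ n / INR (fact n).

Lemma pow_over_fact_nonneg A n : 0 <= A -> 0 <= pow_over_fact A n.
Proof.
  intros. unfold pow_over_fact.
  apply Rdiv_le_0_compat; [now apply pow_le | apply INR_fact_lt_0].
Qed.

Lemma pow_over_fact_halving A N : 0 <= A -> 2 * A <= INR N ->
  forall k, (N <= k)%nat -> pow_over_fact A (S k) <= pow_over_fact A k / 2.
Proof.
  intros HA HN k Hk. unfold pow_over_fact.
  rewrite fact_simpl, mult_INR, <- tech_pow_Rmult.
  pose proof (le_INR _ _ Hk). pose proof (INR_fact_lt_0 k). pose proof (pow_le A k HA).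
  rewrite S_INR.
  apply (Rmult_le_reg_r ((INR k + 1) * INR (fact k))); [nra |].
  replace (A * A ^ k / ((INR k + 1) * INR (fact k)) * ((INR k + 1) * INR (fact k)))
    with (A * A ^ k) by (field; lra).
  replace (A ^ k / INR (fact k) / 2 * ((INR k + 1) * INR (fact k)))
    with (A ^ k * (INR k + 1) / 2) by (field; lra).
  nra.
Qed.

Lemma bounded_seq_cluster_point (u : nat -> R) M : (forall n, Rabs (u n) <= M) ->
  exists p, forall eps, 0 < eps -> forall N, exists n, (N <= n)%nat /\ Rabs (u n - p) < eps.
Proof.
  intros HM.
  destruct (Bolzano_Weierstrass u (fun c => - M <= c <= M) (compact_P3 (- M) M)) as [p Hp].
  { intros n. now apply Rabs_le_between. }
  exists p. intros eps He N.
  destruct (Hp (disc p (mkposreal eps He)) N) as [n [Hn Hv]].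
  - exists (mkposreal eps He). now intros y Hy.
  - now exists n.
Qed.

Fixpoint iter_choice (ch : nat -> nat -> nat) (k : nat) : nat :=
  match k with O => ch O O | S k' => ch k (S (iter_choice ch k')) end.

Lemma bounded_seq2_cluster_point (u v : nat -> R) M :
  (forall n, Rabs (u n) <= M /\ Rabs (v n) <= M) ->
  exists p q, forall eps, 0 < eps -> forall N, exists n, (N <= n)%nat /\
    Rabs (u n - p) < eps /\ Rabs (v n - q) < eps.
Proof.
  intros HM. destruct (bounded_seq_cluster_point u M) as [p Hp]; [intros n; apply HM |].
  assert (Hc : forall k N, exists n, (N <= n)%nat /\ Rabs (u n - p) < / INR (S k)).
  { intros k N. apply Hp, Rinv_0_lt_compat, lt_0_INR. lia. }
  (* [phi] is an increasing index sequence along which [u] tends to [p] *)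
  set (ch := fun k N => proj1_sig (constructive_indefinite_description _ (Hc k N))).
  set (phi := iter_choice ch).
  assert (Hch : forall k N, (N <= ch k N)%nat /\ Rabs (u (ch k N) - p) < / INR (S k)).
  { intros k N. unfold ch. now destruct (constructive_indefinite_description _ (Hc k N)). }
  assert (Hphi : forall k, (k <= phi k)%nat /\ Rabs (u (phi k) - p) < / INR (S k)).
  { induction k as [| k IH]; [split; [lia | apply Hch] |].
    destruct (Hch (S k) (S (phi k))) as [A B]. change (phi (S k)) with (ch (S k) (S (phi k))). split; [lia | exact B]. }
  destruct (bounded_seq_cluster_point (fun k => v (phi k)) M) as [q Hq]; [intros n; apply HM |].
  exists p, q. intros eps He N.
  destruct (archimed_cor1 eps He) as [K [HK HK0]].
  destruct (Hq eps He (N + K)%nat) as [k [Hk Hv]].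
  exists (phi k). destruct (Hphi k) as [A B]. repeat split; [lia | | exact Hv].
  eapply Rlt_trans; [exact B |]. eapply Rle_lt_trans; [| exact HK].
  apply Rinv_le_contravar; [apply lt_0_INR; lia | apply le_INR; lia].
Qed.

(** * Existence of solutions of globally Lipschitz planar systems *)

Definition lipschitz2 (f : R -> R -> R) (L : R) : Prop :=
  forall a b c d, Rabs (f a b - f c d) <= L * (Rabs (a - c) + Rabs (b - d)).

Lemma continuity_pt_lipschitz2 (f : R -> R -> R) L (u v : R -> R) t : 0 <= L ->
  lipschitz2 f L -> continuity_pt u t -> continuity_pt v t ->
  continuity_pt (fun s => f (u s) (v s)) t.
Proof.
  intros HL Hf Hu Hv. apply continuity_pt_of_eps. intros eps He.
  set (e := eps / (2 * (L + 1))).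
  assert (He' : 0 < e) by (unfold e; apply Rdiv_lt_0_compat; lra).
  assert (Hee : 2 * (L + 1) * e = eps) by (unfold e; field; lra).
  destruct (continuity_pt_eps u t Hu e He') as [d1 [Hd1 H1]].
  destruct (continuity_pt_eps v t Hv e He') as [d2 [Hd2 H2]].
  exists (Rmin d1 d2). split; [now apply Rmin_pos |]. intros y Hy.
  pose proof (H1 y (Rlt_le_trans _ _ _ Hy (Rmin_l _ _))).
  pose proof (H2 y (Rlt_le_trans _ _ _ Hy (Rmin_r _ _))).
  pose proof (Hf (u y) (v y) (u t) (v t)).
  pose proof (Rabs_pos (u y - u t)). pose proof (Rabs_pos (v y - v t)).
  nra.
Qed.

Lemma abs_RInt_lipschitz2_sub (g : R -> R -> R) L (u v u' v' : R -> R) t d : 0 <= L ->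
  lipschitz2 g L -> (forall s, continuity_pt u s /\ continuity_pt v s) ->
  (forall s, continuity_pt u' s /\ continuity_pt v' s) ->
  (forall s, Rabs s <= Rabs t -> Rabs (u s - u' s) <= d /\ Rabs (v s - v' s) <= d) ->
  Rabs (RInt (fun s => g (u s) (v s)) 0 t - RInt (fun s => g (u' s) (v' s)) 0 t)
    <= Rabs t * (L * (2 * d)).
Proof.
  intros HL Hg Huv Huv' Hd.
  assert (C : forall s, continuity_pt (fun s => g (u s) (v s)) s) by
    (intros s; apply (continuity_pt_lipschitz2 g L); auto; apply Huv).
  assert (C' : forall s, continuity_pt (fun s => g (u' s) (v' s)) s) by
    (intros s; apply (continuity_pt_lipschitz2 g L); auto; apply Huv').
  rewrite <- (RInt_minus (V := R_CompleteNormedModule)) by now apply ex_RInt_continuity.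
  apply abs_RInt_0_le.
  - intros s. now apply continuity_pt_minus.
  - intros s Hs. destruct (Hd s Hs). eapply Rle_trans; [apply Hg |].
    apply Rmult_le_compat_l; lra.
Qed.

Section Picard.

Variables (f1 f2 : R -> R -> R) (L p1 p2 : R).
Hypotheses (L_ge0 : 0 <= L) (f1_lip : lipschitz2 f1 L) (f2_lip : lipschitz2 f2 L).

Fixpoint picard (n : nat) : (R -> R) * (R -> R) :=
  match n with
  | O => (fun _ => p1, fun _ => p2)
  | S m => (fun t => p1 + RInt (fun s => f1 (fst (picard m) s) (snd (picard m) s)) 0 t,
            fun t => p2 + RInt (fun s => f2 (fst (picard m) s) (snd (picard m) s)) 0 t)
  end.

Local Notation X n := (fst (picard n)).
Local Notation Y n := (snd (picard n)).

Lemma picard_continuous n t : continuity_pt (X n) t /\ continuity_pt (Y n) t.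
Proof.
  revert t. induction n as [| n IH]; intros t.
  - split; apply continuity_pt_const; now intros ? ?.
  - split; eapply is_derive_continuity_pt; apply is_derive_plus_RInt_0;
      intros s; apply (continuity_pt_lipschitz2 _ L); auto; apply IH.
Qed.

Lemma picard_is_derive n t :
  is_derive (X (S n)) t (f1 (X n t) (Y n t)) /\ is_derive (Y (S n)) t (f2 (X n t) (Y n t)).
Proof.
  split; [apply (is_derive_plus_RInt_0 p1 (fun s => f1 (X n s) (Y n s)))
        | apply (is_derive_plus_RInt_0 p2 (fun s => f2 (X n s) (Y n s)))];
    intros s; apply (continuity_pt_lipschitz2 _ L); auto; apply picard_continuous.
Qed.

Lemma picard_at_0 n : X n 0 = p1 /\ Y n 0 = p2.
Proof. destruct n; simpl; [auto |]. rewrite !RInt_point. split; apply Rplus_0_r. Qed.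

Let C := Rabs (f1 p1 p2) + Rabs (f2 p1 p2).

Lemma picard_step_bound n t :
  Rabs (X (S n) t - X n t) + Rabs (Y (S n) t - Y n t) <=
  C * (2 * L) ^ n * Rabs t ^ S n / INR (fact (S n)).
Proof.
  revert t. induction n as [| n IH]; intros t.
  - assert (E : forall c : R, RInt (fun _ => c) 0 t = t * c).
    { intros c. replace (t * c) with ((t - 0) * c) by ring. exact (RInt_const 0 t c). }
    simpl. rewrite !E, !Rmult_1_r, Rdiv_1_r.
    replace (p1 + t * f1 p1 p2 - p1) with (t * f1 p1 p2) by ring.
    replace (p2 + t * f2 p1 p2 - p2) with (t * f2 p1 p2) by ring.
    rewrite !Rabs_mult. unfold C. lra.
  - (* each component of the next step is an antiderivative of an L-Lipschitz image of
       the previous step *)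
    assert (Comp : forall (g : R -> R -> R) (Z : nat -> R -> R), lipschitz2 g L ->
      (forall m s, is_derive (Z (S m)) s (g (X m s) (Y m s))) -> (forall m, Z m 0 = Z O 0) ->
      Rabs (Z (S (S n)) t - Z (S n) t) <=
        L * (C * (2 * L) ^ n) * Rabs t ^ S (S n) / INR (fact (S (S n)))).
    { intros g Z Hg HZ HZ0.
      apply (abs_le_of_is_derive_pow_fact (fun s => Z (S (S n)) s - Z (S n) s)
        (fun s => g (X (S n) s) (Y (S n) s) - g (X n s) (Y n s))).
      - rewrite (HZ0 (S (S n))), (HZ0 (S n)). ring.
      - intros s. apply (is_derive_minus (Z (S (S n))) (Z (S n))); apply HZ.
      - intros s. eapply Rle_trans; [apply Hg |].
        replace (L * (C * (2 * L) ^ n) * Rabs s ^ S n / INR (fact (S n)))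
          with (L * (C * (2 * L) ^ n * Rabs s ^ S n / INR (fact (S n)))) by (unfold Rdiv; ring).
        apply Rmult_le_compat_l; [exact L_ge0 |].
        apply IH. }
    pose proof (Comp f1 (fun m => X m) f1_lip (fun m s => proj1 (picard_is_derive m s))
      (fun m => eq_trans (proj1 (picard_at_0 m)) (eq_sym (proj1 (picard_at_0 O))))).
    pose proof (Comp f2 (fun m => Y m) f2_lip (fun m s => proj2 (picard_is_derive m s))
      (fun m => eq_trans (proj2 (picard_at_0 m)) (eq_sym (proj2 (picard_at_0 O))))).
    replace ((2 * L) ^ S n) with (2 * L * (2 * L) ^ n) by (simpl; ring).
    unfold Rdiv in *. lra.
Qed.

Lemma picard_step_bound_uniform U n s : 0 <= U -> Rabs s <= U ->
  Rabs (X (S n) s - X n s) + Rabs (Y (S n) s - Y n s) <= C * U * pow_over_fact (2 * L * U) n.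
Proof.
  intros HU Hs. eapply Rle_trans; [apply picard_step_bound |]. unfold pow_over_fact.
  assert (HC : 0 <= C) by (unfold C; pose proof (Rabs_pos (f1 p1 p2)); pose proof (Rabs_pos (f2 p1 p2)); lra).
  assert (HA : 0 <= C * (2 * L) ^ n) by (apply Rmult_le_pos; [| apply pow_le]; lra).
  assert (Hsn : Rabs s ^ n <= U ^ n) by (apply pow_incr; split; [apply Rabs_pos | exact Hs]).
  assert (HF : INR (fact n) <= INR (fact (S n))) by (apply le_INR; rewrite fact_simpl; lia).
  pose proof (INR_fact_lt_0 n). pose proof (pow_le _ n (Rabs_pos s)). pose proof (Rabs_pos s).
  rewrite <- tech_pow_Rmult, (Rpow_mult_distr (2 * L) U n).
  apply Rle_trans with (C * (2 * L) ^ n * (U * U ^ n) / INR (fact (S n))).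
  - unfold Rdiv. apply Rmult_le_compat_r; [left; apply Rinv_0_lt_compat, INR_fact_lt_0 |].
    apply Rmult_le_compat_l; [exact HA |]. apply Rmult_le_compat; auto.
  - replace (C * U * ((2 * L) ^ n * U ^ n / INR (fact n)))
      with (C * (2 * L) ^ n * (U * U ^ n) / INR (fact n)) by (field; lra).
    unfold Rdiv. apply Rmult_le_compat_l; [| apply Rinv_le_contravar; auto].
    apply Rmult_le_pos; [exact HA |]. apply Rmult_le_pos; [lra | apply pow_le; lra].
Qed.

Definition picard_lim1 (t : R) : R := real (Lim_seq (fun n => X n t)).
Definition picard_lim2 (t : R) : R := real (Lim_seq (fun n => Y n t)).

Lemma picard_cv U : 0 <= U -> exists N, forall s, Rabs s <= U ->
  is_lim_seq (fun n => X n s) (picard_lim1 s) /\ is_lim_seq (fun n => Y n s) (picard_lim2 s) /\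
  forall n, (N <= n)%nat ->
    Rabs (picard_lim1 s - X n s) <= 2 * (C * U * pow_over_fact (2 * L * U) n) /\
    Rabs (picard_lim2 s - Y n s) <= 2 * (C * U * pow_over_fact (2 * L * U) n).
Proof.
  intros HU.
  assert (HC : 0 <= C) by (unfold C; pose proof (Rabs_pos (f1 p1 p2)); pose proof (Rabs_pos (f2 p1 p2)); lra).
  assert (HA : 0 <= 2 * L * U) by nra.
  destruct (INR_unbounded (2 * (2 * L * U))) as [N HN].
  set (b := fun k => C * U * pow_over_fact (2 * L * U) k).
  assert (Hb0 : forall k, 0 <= b k) by (intros k; apply Rmult_le_pos; [nra | now apply pow_over_fact_nonneg]).
  assert (Hhalf : forall k, (N <= k)%nat -> b (S k) <= b k / 2).
  { intros k Hk. unfold b. pose proof (pow_over_fact_halving _ N HA ltac:(lra) k Hk) as Hh.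
    replace (C * U * pow_over_fact (2 * L * U) k / 2)
      with (C * U * (pow_over_fact (2 * L * U) k / 2)) by (unfold Rdiv; ring).
    apply Rmult_le_compat_l; [nra | exact Hh]. }
  assert (Hcv : is_lim_seq b 0).
  { replace (Finite 0) with (Rbar_mult (C * U) 0) by (simpl; now rewrite Rmult_0_r).
    apply is_lim_seq_scal_l, is_lim_seq_Reals, cv_speed_pow_fact. }
  exists N. intros s Hs.
  pose proof (fun k => picard_step_bound_uniform U k s HU Hs) as Step.
  destruct (is_lim_seq_of_halving_steps (fun k => X k s) b N Hb0) as [L1 B1];
    [| exact Hhalf | exact Hcv |].
  { intros k _. pose proof (Step k). pose proof (Rabs_pos (Y (S k) s - Y k s)). unfold b. lra. }
  destruct (is_lim_seq_of_halving_steps (fun k => Y k s) b N Hb0) as [L2 B2];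
    [| exact Hhalf | exact Hcv |].
  { intros k _. pose proof (Step k). pose proof (Rabs_pos (X (S k) s - X k s)). unfold b. lra. }
  split; [exact L1 | split; [exact L2 |]].
  intros n Hn. split; [apply B1 | apply B2]; exact Hn.
Qed.

Lemma picard_CVU (U : posreal) :
  CVU (fun n => X n) picard_lim1 0 U /\ CVU (fun n => Y n) picard_lim2 0 U.
Proof.
  pose proof (cond_pos U).
  destruct (picard_cv U ltac:(lra)) as [N HN].
  assert (Hb : is_lim_seq (fun n => 2 * (C * U * pow_over_fact (2 * L * U) n)) 0).
  { replace (Finite 0) with (Rbar_mult (2 * (C * U)) 0) by (simpl; now rewrite Rmult_0_r).
    apply (is_lim_seq_ext (fun n => 2 * (C * U) * pow_over_fact (2 * L * U) n));
      [intros; ring |].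
    apply is_lim_seq_scal_l, is_lim_seq_Reals, cv_speed_pow_fact. }
  split; intros eps He; destruct (proj2 (is_lim_seq_spec _ _) Hb (mkposreal eps He)) as [M HM];
    exists (N + M)%nat; intros n s Hn Hs; unfold Boule in Hs; rewrite Rminus_0_r in Hs;
    specialize (HM n ltac:(lia)); simpl in HM; rewrite Rminus_0_r in HM;
    destruct (HN s ltac:(lra)) as (_ & _ & B); destruct (B n ltac:(lia));
    eapply Rle_lt_trans; try eassumption; eapply Rle_lt_trans; try apply RRle_abs; exact HM.
Qed.

Lemma picard_lim_continuous t :
  continuity_pt picard_lim1 t /\ continuity_pt picard_lim2 t.
Proof.
  set (U := mkposreal (Rabs t + 1) ltac:(pose proof (Rabs_pos t); lra)).
  assert (Ht : Boule 0 U t) by (unfold Boule; simpl; rewrite Rminus_0_r; lra).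
  destruct (picard_CVU U) as [H1 H2].
  split; [apply (CVU_continuity _ _ _ _ H1) | apply (CVU_continuity _ _ _ _ H2)]; auto;
    intros n s _; apply picard_continuous.
Qed.

Lemma picard_RInt_cv (g : R -> R -> R) t : lipschitz2 g L ->
  is_lim_seq (fun n => RInt (fun s => g (X n s) (Y n s)) 0 t)
    (RInt (fun s => g (picard_lim1 s) (picard_lim2 s)) 0 t).
Proof.
  intros Hg. apply is_lim_seq_spec. intros eps.
  set (U := mkposreal (Rabs t + 1) ltac:(pose proof (Rabs_pos t); lra)).
  pose proof (cond_pos eps). pose proof (Rabs_pos t).
  set (d := eps / (2 * (Rabs t * L + 1))).
  assert (Hd : 0 < d) by (unfold d; apply Rdiv_lt_0_compat; nra).
  destruct (picard_CVU U) as [H1 H2].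
  destruct (H1 d Hd) as [N1 HN1]. destruct (H2 d Hd) as [N2 HN2].
  exists (N1 + N2)%nat. intros n Hn.
  assert (Close : forall s, Rabs s <= Rabs t ->
    Rabs (X n s - picard_lim1 s) <= d /\ Rabs (Y n s - picard_lim2 s) <= d).
  { intros s Hs. assert (HB : Boule 0 U s) by (unfold Boule; simpl; rewrite Rminus_0_r; lra).
    rewrite (Rabs_minus_sym (X n s)), (Rabs_minus_sym (Y n s)).
    split; left; [apply HN1 | apply HN2]; auto; lia. }
  eapply Rle_lt_trans.
  { apply (abs_RInt_lipschitz2_sub g L); auto; [apply picard_continuous | apply picard_lim_continuous]. }
  apply (Rmult_lt_reg_r (Rabs t * L + 1)); [nra |].
  replace (Rabs t * (L * (2 * d)) * (Rabs t * L + 1)) with (Rabs t * L * eps) by (unfold d; field; nra).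
  simpl. nra.
Qed.

Lemma picard_lim_integral t :
  picard_lim1 t = p1 + RInt (fun s => f1 (picard_lim1 s) (picard_lim2 s)) 0 t /\
  picard_lim2 t = p2 + RInt (fun s => f2 (picard_lim1 s) (picard_lim2 s)) 0 t.
Proof.
  destruct (picard_cv (Rabs t) (Rabs_pos t)) as [N HN].
  destruct (HN t (Rle_refl _)) as (L1 & L2 & _).
  apply is_lim_seq_incr_1 in L1. apply is_lim_seq_incr_1 in L2.
  pose proof (is_lim_seq_plus' _ _ _ _ (is_lim_seq_const p1) (picard_RInt_cv f1 t f1_lip)) as R1.
  pose proof (is_lim_seq_plus' _ _ _ _ (is_lim_seq_const p2) (picard_RInt_cv f2 t f2_lip)) as R2.
  split; apply Rbar_finite_eq; rewrite <- (is_lim_seq_unique _ _ L1) || rewrite <- (is_lim_seq_unique _ _ L2);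
    apply is_lim_seq_unique; assumption.
Qed.

Theorem lipschitz2_ode_solution_exists : exists x1 x2 : R -> R, x1 0 = p1 /\ x2 0 = p2 /\
  forall t, is_derive x1 t (f1 (x1 t) (x2 t)) /\ is_derive x2 t (f2 (x1 t) (x2 t)).
Proof.
  exists picard_lim1, picard_lim2.
  assert (Cont : forall (g : R -> R -> R) s, lipschitz2 g L ->
    continuity_pt (fun s => g (picard_lim1 s) (picard_lim2 s)) s).
  { intros g s Hg. apply (continuity_pt_lipschitz2 g L); auto; apply picard_lim_continuous. }
  split; [| split; [| intros t; split]].
  - rewrite (proj1 (picard_lim_integral 0)), RInt_point. apply Rplus_0_r.
  - rewrite (proj2 (picard_lim_integral 0)), RInt_point. apply Rplus_0_r.
  - apply (is_derive_ext (fun t => p1 + RInt (fun s => f1 (picard_lim1 s) (picard_lim2 s)) 0 t));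
      [intros u; symmetry; apply picard_lim_integral |].
    apply (is_derive_plus_RInt_0 p1 (fun s => f1 (picard_lim1 s) (picard_lim2 s))).
    intros s. now apply Cont.
  - apply (is_derive_ext (fun t => p2 + RInt (fun s => f2 (picard_lim1 s) (picard_lim2 s)) 0 t));
      [intros u; symmetry; apply picard_lim_integral |].
    apply (is_derive_plus_RInt_0 p2 (fun s => f2 (picard_lim1 s) (picard_lim2 s))).
    intros s. now apply Cont.
Qed.

End Picard.

(** * The saturated oscillator *)

Section Oscillator.

Variables (w k1 k2 ub ul : R).
Hypotheses (ub_pos : 0 < ub) (ul_pos : 0 < ul).

Ltac sat_cases := unfold sat, Rmin, Rmax in *; repeat destruct Rle_dec; try lra.

Lemma sat_le_compat a b : a <= b -> sat ub ul a <= sat ub ul b.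
Proof. intros. sat_cases. Qed.

Lemma sat_lipschitz a b : Rabs (sat ub ul a - sat ub ul b) <= Rabs (a - b).
Proof. unfold Rabs; repeat destruct Rcase_abs; sat_cases. Qed.

Lemma sat_0 : sat ub ul 0 = 0.
Proof. sat_cases. Qed.

Lemma Rmin_0_le_sat x : Rmin x 0 <= sat ub ul x.
Proof. sat_cases. Qed.

Lemma sat_le_Rmax_0 x : sat ub ul x <= Rmax x 0.
Proof. sat_cases. Qed.

Lemma sat_eq_unsaturated a b : - ul < a < ub -> sat ub ul b = sat ub ul a -> b = a.
Proof. intros. sat_cases. Qed.

Lemma Rabs_sat_le x : Rabs (sat ub ul x) <= Rabs x.
Proof.
  pose proof (sat_lipschitz x 0) as H. now rewrite sat_0, !Rminus_0_r in H.
Qed.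

Definition osc_field2 (a b : R) : R := - w * a - w * sat ub ul (k1 * a + k2 * b).

Lemma lipschitz2_osc_field1 : lipschitz2 (fun a b => w * b) (Rabs w * (2 + Rabs k1 + Rabs k2)).
Proof.
  intros a b c d. rewrite <- Rmult_minus_distr_l, Rabs_mult.
  pose proof (Rabs_pos (a - c)). pose proof (Rabs_pos (b - d)).
  pose proof (Rabs_pos k1). pose proof (Rabs_pos k2).
  rewrite Rmult_assoc. apply Rmult_le_compat_l; [apply Rabs_pos | nra].
Qed.

Lemma lipschitz2_osc_field2 : lipschitz2 osc_field2 (Rabs w * (2 + Rabs k1 + Rabs k2)).
Proof.
  intros a b c d. unfold osc_field2.
  pose proof (sat_lipschitz (k1 * a + k2 * b) (k1 * c + k2 * d)) as S.
  replace (k1 * a + k2 * b - (k1 * c + k2 * d)) with (k1 * (a - c) + k2 * (b - d)) in S by ring.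
  pose proof (Rabs_triang (k1 * (a - c)) (k2 * (b - d))). rewrite !Rabs_mult in *.
  replace (- w * a - w * sat ub ul (k1 * a + k2 * b) - (- w * c - w * sat ub ul (k1 * c + k2 * d)))
    with (- w * ((a - c) + (sat ub ul (k1 * a + k2 * b) - sat ub ul (k1 * c + k2 * d)))) by ring.
  rewrite Rabs_mult, Rabs_Ropp.
  pose proof (Rabs_triang (a - c) (sat ub ul (k1 * a + k2 * b) - sat ub ul (k1 * c + k2 * d))).
  pose proof (Rabs_pos (a - c)). pose proof (Rabs_pos (b - d)).
  pose proof (Rabs_pos k1). pose proof (Rabs_pos k2).
  rewrite Rmult_assoc. apply Rmult_le_compat_l; [apply Rabs_pos | nra].
Qed.

Lemma is_solution_exists p1 p2 :
  exists x1 x2 : R -> R, x1 0 = p1 /\ x2 0 = p2 /\ is_solution w k1 k2 ub ul x1 x2.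
Proof.
  assert (HL : 0 <= Rabs w * (2 + Rabs k1 + Rabs k2))
    by (pose proof (Rabs_pos w); pose proof (Rabs_pos k1); pose proof (Rabs_pos k2); nra).
  exact (lipschitz2_ode_solution_exists _ _ _ p1 p2 HL
           lipschitz2_osc_field1 lipschitz2_osc_field2).
Qed.

Lemma is_solution_shift x1 x2 T : is_solution w k1 k2 ub ul x1 x2 ->
  is_solution w k1 k2 ub ul (fun s => x1 (T + s)) (fun s => x2 (T + s)).
Proof.
  intros Hs t. destruct (Hs (T + t)) as [D1 D2].
  assert (Dsh : is_derive (fun s => T + s) t 1) by (derive_as (0 + 1); derive_rules).
  split.
  - derive_as (1 * (w * x2 (T + t))). now apply (is_derive_comp x1 (fun s => T + s)).
  - derive_as (1 * (- w * x1 (T + t) - w * sat ub ul (k1 * x1 (T + t) + k2 * x2 (T + t)))).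
    now apply (is_derive_comp x2 (fun s => T + s)).
Qed.

(* Continuous dependence on initial data: Gronwall applied to the squared distance. *)
Lemma is_solution_sqr_dist_le y1 y2 z1 z2 :
  is_solution w k1 k2 ub ul y1 y2 -> is_solution w k1 k2 ub ul z1 z2 -> forall s,
  (y1 s - z1 s) * (y1 s - z1 s) + (y2 s - z2 s) * (y2 s - z2 s) <=
  exp (4 * (Rabs w * (2 + Rabs k1 + Rabs k2)) * Rabs s) *
  ((y1 0 - z1 0) * (y1 0 - z1 0) + (y2 0 - z2 0) * (y2 0 - z2 0)).
Proof.
  intros Hy Hz. set (L := Rabs w * (2 + Rabs k1 + Rabs k2)).
  assert (HL : 0 <= L)
    by (unfold L; pose proof (Rabs_pos w); pose proof (Rabs_pos k1); pose proof (Rabs_pos k2); nra).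
  apply (Gronwall_abs (fun s => (y1 s - z1 s) * (y1 s - z1 s) + (y2 s - z2 s) * (y2 s - z2 s))
    (fun s => 2 * (y1 s - z1 s) * (w * y2 s - w * z2 s) +
    2 * (y2 s - z2 s) * (osc_field2 (y1 s) (y2 s) - osc_field2 (z1 s) (z2 s)))); [nra | |].
  - intros s. destruct (Hy s) as [Dy1 Dy2]. destruct (Hz s) as [Dz1 Dz2].
    pose proof (is_derive_minus _ _ s _ _ Dy1 Dz1).
    pose proof (is_derive_minus _ _ s _ _ Dy2 Dz2).
    derive_as (((w * y2 s - w * z2 s) * (y1 s - z1 s) + (y1 s - z1 s) * (w * y2 s - w * z2 s)) +
               ((osc_field2 (y1 s) (y2 s) - osc_field2 (z1 s) (z2 s)) * (y2 s - z2 s)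
                + (y2 s - z2 s) * (osc_field2 (y1 s) (y2 s) - osc_field2 (z1 s) (z2 s)))).
    apply (@is_derive_plus R_AbsRing R_NormedModule);
      [apply (is_derive_mult (fun t => y1 t - z1 t) (fun t => y1 t - z1 t)) |
       apply (is_derive_mult (fun t => y2 t - z2 t) (fun t => y2 t - z2 t))];
      auto; exact Rmult_comm.
  - intros s. set (d1 := y1 s - z1 s). set (d2 := y2 s - z2 s).
    pose proof (lipschitz2_osc_field1 (y1 s) (y2 s) (z1 s) (z2 s)) as F1.
    pose proof (lipschitz2_osc_field2 (y1 s) (y2 s) (z1 s) (z2 s)) as F2.
    fold L d1 d2 in F1, F2. cbv beta in F1.
    set (e1 := w * y2 s - w * z2 s) in *.
    set (e2 := osc_field2 (y1 s) (y2 s) - osc_field2 (z1 s) (z2 s)) in *.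
    (* |2 d1 e1 + 2 d2 e2| <= 4 L (|d1| + |d2|)^2 / 2 <= 4 L (d1^2 + d2^2) *)
    pose proof (Rabs_triang (2 * d1 * e1) (2 * d2 * e2)).
    rewrite !Rabs_mult, (Rabs_pos_eq 2) in * by lra.
    pose proof (Rabs_pos d1). pose proof (Rabs_pos d2).
    pose proof (Rmult_le_compat_l _ _ _ (Rabs_pos d1) F1).
    pose proof (Rmult_le_compat_l _ _ _ (Rabs_pos d2) F2).
    rewrite <- (Rabs_mult_self d1), <- (Rabs_mult_self d2).
    pose proof (Rmult_le_pos _ _ HL (Rle_0_sqr (Rabs d1 - Rabs d2))). unfold Rsqr in *.
    nra.
Qed.

(** * The Lyapunov function *)

Lemma continuity_pt_sat x : continuity_pt (sat ub ul) x.
Proof.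
  apply continuity_pt_of_eps. intros eps He. exists eps. split; [exact He |].
  intros y Hy. eapply Rle_lt_trans; [apply sat_lipschitz | exact Hy].
Qed.

Definition sat_potential (r : R) : R := RInt (fun p => p + sat ub ul (k1 * p)) 0 r.

Definition lyap (a b : R) : R := b * b / 2 + sat_potential a.

Lemma is_derive_sat_potential r : is_derive sat_potential r (r + sat ub ul (k1 * r)).
Proof.
  apply (is_derive_ext (fun t => 0 + RInt (fun p => p + sat ub ul (k1 * p)) 0 t));
    [intros t; apply Rplus_0_l |].
  apply (is_derive_plus_RInt_0 0 (fun p => p + sat ub ul (k1 * p))). intros s.
  apply continuity_pt_plus; [apply continuity_pt_id |].
  apply (continuity_pt_comp (fun p => k1 * p) (sat ub ul));
    [apply continuity_pt_scal, continuity_pt_id | apply continuity_pt_sat].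
Qed.

Lemma sat_potential_0 : sat_potential 0 = 0.
Proof. apply (RInt_point (V := R_CompleteNormedModule)). Qed.

Lemma sat_potential_le r : sat_potential r <= (1 + Rabs k1) / 2 * (r * r).
Proof.
  enough (0 - sat_potential 0 <= (1 + Rabs k1) / 2 * (r * r) - sat_potential r)
    by (rewrite sat_potential_0 in *; lra).
  replace 0 with ((1 + Rabs k1) / 2 * (0 * 0)) at 1 by ring.
  apply (min_at_0_of_is_derive (fun r => (1 + Rabs k1) / 2 * (r * r) - sat_potential r)
    (fun r => (1 + Rabs k1) * r - (r + sat ub ul (k1 * r)))).
  - intros x. pose proof (is_derive_sat_potential x).
    derive_as ((1 + Rabs k1) / 2 * (1 * x + x * 1) - (x + sat ub ul (k1 * x))). derive_rules.
  - intros x Hx. pose proof (Rabs_sat_le (k1 * x)). rewrite Rabs_mult, (Rabs_pos_eq x) in * by lra.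
    pose proof (RRle_abs (sat ub ul (k1 * x))). nra.
  - intros x Hx. pose proof (Rabs_sat_le (k1 * x)). rewrite Rabs_mult, (Rabs_left1 x) in * by lra.
    pose proof (Rabs_Ropp (sat ub ul (k1 * x))). pose proof (RRle_abs (- sat ub ul (k1 * x))). nra.
Qed.

Lemma id_plus_sat_ge r : -1 < k1 -> 0 <= r -> Rmin 1 (1 + k1) * r <= r + sat ub ul (k1 * r).
Proof.
  intros Hk Hr. pose proof (Rmin_0_le_sat (k1 * r)).
  unfold Rmin in *. repeat destruct Rle_dec; nra.
Qed.

Lemma id_plus_sat_le r : -1 < k1 -> r <= 0 -> r + sat ub ul (k1 * r) <= Rmin 1 (1 + k1) * r.
Proof.
  intros Hk Hr. pose proof (sat_le_Rmax_0 (k1 * r)).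
  unfold Rmin, Rmax in *. repeat destruct Rle_dec; nra.
Qed.

Lemma sat_potential_ge r : -1 < k1 -> Rmin 1 (1 + k1) / 2 * (r * r) <= sat_potential r.
Proof.
  intros Hk.
  enough (sat_potential 0 - 0 <= sat_potential r - Rmin 1 (1 + k1) / 2 * (r * r))
    by (rewrite sat_potential_0 in *; lra).
  replace 0 with (Rmin 1 (1 + k1) / 2 * (0 * 0)) at 2 by ring.
  apply (min_at_0_of_is_derive (fun r => sat_potential r - Rmin 1 (1 + k1) / 2 * (r * r))
    (fun r => (r + sat ub ul (k1 * r)) - Rmin 1 (1 + k1) * r)).
  - intros x. pose proof (is_derive_sat_potential x).
    derive_as ((x + sat ub ul (k1 * x)) - Rmin 1 (1 + k1) / 2 * (1 * x + x * 1)). derive_rules.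
  - intros x Hx. pose proof (id_plus_sat_ge x Hk Hx). lra.
  - intros x Hx. pose proof (id_plus_sat_le x Hk Hx). lra.
Qed.

Lemma Rmin_1_pos : -1 < k1 -> 0 < Rmin 1 (1 + k1).
Proof. intros. unfold Rmin; destruct Rle_dec; lra. Qed.

Lemma lyap_ge a b : -1 < k1 -> Rmin 1 (1 + k1) / 2 * (a * a + b * b) <= lyap a b.
Proof.
  intros Hk. unfold lyap. pose proof (sat_potential_ge a Hk).
  pose proof (Rmin_l 1 (1 + k1)). pose proof (Rmin_1_pos Hk). nra.
Qed.

Lemma lyap_le a b : lyap a b <= (1 + Rabs k1) / 2 * (a * a + b * b).
Proof. unfold lyap. pose proof (sat_potential_le a). pose proof (Rabs_pos k1). nra. Qed.

Lemma lyap_nonneg a b : -1 < k1 -> 0 <= lyap a b.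
Proof.
  intros Hk. pose proof (lyap_ge a b Hk). pose proof (Rmin_1_pos Hk).
  pose proof (Rle_0_sqr a). pose proof (Rle_0_sqr b). unfold Rsqr in *. nra.
Qed.

Lemma is_derive_lyap x1 x2 t : is_solution w k1 k2 ub ul x1 x2 ->
  is_derive (fun t => lyap (x1 t) (x2 t)) t
    (- w * x2 t * (sat ub ul (k1 * x1 t + k2 * x2 t) - sat ub ul (k1 * x1 t))).
Proof.
  intros Hs. destruct (Hs t) as [D1 D2]. unfold lyap.
  pose proof (is_derive_comp sat_potential x1 t _ _ (is_derive_sat_potential (x1 t)) D1).
  derive_as (/ 2 * ((- w * x1 t - w * sat ub ul (k1 * x1 t + k2 * x2 t)) * x2 t
                    + x2 t * (- w * x1 t - w * sat ub ul (k1 * x1 t + k2 * x2 t)))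
             + (w * x2 t) * (x1 t + sat ub ul (k1 * x1 t))).
  apply (@is_derive_plus R_AbsRing R_NormedModule); [| assumption].
  apply (is_derive_ext (fun t => / 2 * (x2 t * x2 t))); [intros; simpl; unfold Rdiv; ring |].
  derive_rules.
Qed.

Lemma lyap_nonincreasing x1 x2 t1 t2 : 0 < w -> 0 <= k2 -> is_solution w k1 k2 ub ul x1 x2 ->
  t1 <= t2 -> lyap (x1 t2) (x2 t2) <= lyap (x1 t1) (x2 t1).
Proof.
  intros Hw Hk Hs Ht.
  apply (le_of_is_derive_nonpos (fun t => lyap (x1 t) (x2 t))
    (fun t => - w * x2 t * (sat ub ul (k1 * x1 t + k2 * x2 t) - sat ub ul (k1 * x1 t))) _ _ Ht);
    [intros x _; now apply is_derive_lyap |].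
  intros x _. enough (Hs2 : 0 <= x2 x * (sat ub ul (k1 * x1 x + k2 * x2 x) - sat ub ul (k1 * x1 x)))
    by (rewrite Rmult_assoc; pose proof (Rmult_le_compat_l w _ _ (Rlt_le _ _ Hw) Hs2); lra).
  destruct (Rle_dec 0 (x2 x)).
  - pose proof (sat_le_compat (k1 * x1 x) (k1 * x1 x + k2 * x2 x) ltac:(nra)). nra.
  - pose proof (sat_le_compat (k1 * x1 x + k2 * x2 x) (k1 * x1 x) ltac:(nra)). nra.
Qed.

Lemma lyap_nondecreasing x1 x2 t1 t2 : 0 < w -> k2 <= 0 -> is_solution w k1 k2 ub ul x1 x2 ->
  t1 <= t2 -> lyap (x1 t1) (x2 t1) <= lyap (x1 t2) (x2 t2).
Proof.
  intros Hw Hk Hs Ht.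
  apply (le_of_is_derive_nonneg (fun t => lyap (x1 t) (x2 t))
    (fun t => - w * x2 t * (sat ub ul (k1 * x1 t + k2 * x2 t) - sat ub ul (k1 * x1 t))) _ _ Ht);
    [intros x _; now apply is_derive_lyap |].
  intros x _. enough (Hs2 : x2 x * (sat ub ul (k1 * x1 x + k2 * x2 x) - sat ub ul (k1 * x1 x)) <= 0)
    by (rewrite Rmult_assoc; pose proof (Rmult_le_compat_l w _ _ (Rlt_le _ _ Hw) Hs2); lra).
  destruct (Rle_dec 0 (x2 x)).
  - pose proof (sat_le_compat (k1 * x1 x + k2 * x2 x) (k1 * x1 x) ltac:(nra)). nra.
  - pose proof (sat_le_compat (k1 * x1 x) (k1 * x1 x + k2 * x2 x) ltac:(nra)). nra.
Qed.

Lemma lyap_continuity a0 b0 : forall eps, 0 < eps -> exists eta, 0 < eta /\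
  forall a b, Rabs (a - a0) < eta -> Rabs (b - b0) < eta -> Rabs (lyap a b - lyap a0 b0) < eps.
Proof.
  intros eps He.
  pose proof (is_derive_continuity_pt _ _ _ (is_derive_sat_potential a0)) as CG.
  assert (CB : continuity_pt (fun b => b * b / 2) b0)
    by (eapply is_derive_continuity_pt; unfold Rdiv; derive_rules).
  destruct (continuity_pt_eps _ _ CG (eps / 2) ltac:(lra)) as [d1 [Hd1 H1]].
  destruct (continuity_pt_eps _ _ CB (eps / 2) ltac:(lra)) as [d2 [Hd2 H2]].
  exists (Rmin d1 d2). split; [now apply Rmin_pos |]. intros a b Ha Hb.
  specialize (H1 a (Rlt_le_trans _ _ _ Ha (Rmin_l _ _))).
  specialize (H2 b (Rlt_le_trans _ _ _ Hb (Rmin_r _ _))).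
  unfold lyap. pose proof (Rabs_triang (b * b / 2 - b0 * b0 / 2) (sat_potential a - sat_potential a0)).
  replace (b * b / 2 - b0 * b0 / 2 + (sat_potential a - sat_potential a0))
    with (b * b / 2 + sat_potential a - (b0 * b0 / 2 + sat_potential a0)) in * by ring.
  lra.
Qed.

(** * LaSalle's invariance argument *)

Lemma lyap_limit x1 x2 : 0 < w -> -1 < k1 -> 0 <= k2 -> is_solution w k1 k2 ub ul x1 x2 ->
  exists l, 0 <= l /\ (forall t, l <= lyap (x1 t) (x2 t)) /\
    (forall eps, 0 < eps -> exists T, forall t, T <= t -> lyap (x1 t) (x2 t) < l + eps).
Proof.
  intros Hw Hk1 Hk2 Hs. apply (nonincreasing_nonneg_limit (fun t => lyap (x1 t) (x2 t))).
  - intros t. now apply lyap_nonneg.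
  - intros t1 t2 Ht. now apply lyap_nonincreasing.
Qed.

Lemma is_lim_of_lyap_to_0 x1 x2 : -1 < k1 ->
  (forall eps, 0 < eps -> exists T, forall t, T <= t -> lyap (x1 t) (x2 t) < eps) ->
  is_lim x1 p_infty 0 /\ is_lim x2 p_infty 0.
Proof.
  intros Hk H. set (c := Rmin 1 (1 + k1)). assert (Hc : 0 < c) by now apply Rmin_1_pos.
  assert (Small : forall eps, 0 < eps -> exists T, forall t, T < t ->
            x1 t * x1 t < eps * eps /\ x2 t * x2 t < eps * eps).
  { intros eps He. destruct (H (c / 2 * (eps * eps))) as [T HT];
      [apply Rmult_lt_0_compat; [lra | now apply Rmult_lt_0_compat] |].
    exists T. intros t Ht. specialize (HT t ltac:(lra)).
    pose proof (lyap_ge (x1 t) (x2 t) Hk) as Hge. fold c in Hge.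
    pose proof (Rle_0_sqr (x1 t)). pose proof (Rle_0_sqr (x2 t)). unfold Rsqr in *.
    assert (x1 t * x1 t + x2 t * x2 t < eps * eps) by (apply (Rmult_lt_reg_l (c / 2)); lra).
    lra. }
  split; apply is_lim_pinfty_0_iff; intros eps He; destruct (Small eps He) as [T HT];
    exists T; intros t Ht; apply Rabs_lt_of_sqr_lt; auto; apply HT, Ht.
Qed.

(* By continuous dependence, [z] at time [s] is approximated by time-shifts of [x]. *)
Lemma lyap_const_on_omega_limit x1 x2 z1 z2 l p q :
  is_solution w k1 k2 ub ul x1 x2 -> is_solution w k1 k2 ub ul z1 z2 -> z1 0 = p -> z2 0 = q ->
  (forall t, l <= lyap (x1 t) (x2 t)) ->
  (forall eps, 0 < eps -> exists T, forall t, T <= t -> lyap (x1 t) (x2 t) < l + eps) ->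
  (forall eps, 0 < eps -> forall N, exists n, (N <= n)%nat /\
     Rabs (x1 (INR n) - p) < eps /\ Rabs (x2 (INR n) - q) < eps) ->
  forall s, lyap (z1 s) (z2 s) = l.
Proof.
  intros Hx Hz Hp Hq Hlb Hev Hcl s. apply cond_eq. intros eps He.
  destruct (lyap_continuity (z1 s) (z2 s) (eps / 2) ltac:(lra)) as [eta [Heta Hc]].
  destruct (Hev (eps / 2) ltac:(lra)) as [T HT].
  set (K := exp (4 * (Rabs w * (2 + Rabs k1 + Rabs k2)) * Rabs s)).
  assert (HK : 0 < K) by apply exp_pos.
  set (r := Rmin 1 (eta * eta / (4 * K))).
  assert (Hr : 0 < r) by (apply Rmin_pos; [lra | apply Rdiv_lt_0_compat; nra]).
  assert (Hrr : r * r <= eta * eta / (4 * K)).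
  { pose proof (Rmin_r 1 (eta * eta / (4 * K))) as H1.
    pose proof (Rmult_le_compat_l r r 1 (Rlt_le _ _ Hr) (Rmin_l _ _)) as H2.
    fold r in H1, H2. lra. }
  destruct (INR_unbounded (T - s)) as [N0 HN0].
  destruct (Hcl r Hr N0) as [n [Hn [A1 A2]]].
  pose proof (le_INR _ _ Hn). pose proof (pos_INR N0).
  pose proof (is_solution_sqr_dist_le _ _ _ _ (is_solution_shift x1 x2 (INR n) Hx) Hz s) as CD.
  fold K in CD. cbv beta in CD. rewrite !Rplus_0_r, Hp, Hq in CD.
  pose proof (Rabs_mult_self (x1 (INR n) - p)). pose proof (Rabs_mult_self (x2 (INR n) - q)).
  pose proof (Rabs_pos (x1 (INR n) - p)). pose proof (Rabs_pos (x2 (INR n) - q)).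
  assert (Hsum : K * ((x1 (INR n) - p) * (x1 (INR n) - p) + (x2 (INR n) - q) * (x2 (INR n) - q))
                 < eta * eta).
  { apply Rle_lt_trans with (K * (2 * (eta * eta / (4 * K)))).
    - apply Rmult_le_compat_l; nra.
    - replace (K * (2 * (eta * eta / (4 * K)))) with (eta * eta / 2) by (field; lra). nra. }
  pose proof (Rle_0_sqr (x1 (INR n + s) - z1 s)). pose proof (Rle_0_sqr (x2 (INR n + s) - z2 s)).
  unfold Rsqr in *.
  assert (E1 : Rabs (x1 (INR n + s) - z1 s) < eta) by (apply Rabs_lt_of_sqr_lt; lra).
  assert (E2 : Rabs (x2 (INR n + s) - z2 s) < eta) by (apply Rabs_lt_of_sqr_lt; lra).
  specialize (Hc _ _ E1 E2). specialize (HT (INR n + s) ltac:(lra)).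
  specialize (Hlb (INR n + s)).
  apply Rabs_def2 in Hc. apply Rabs_def1; lra.
Qed.

Lemma id_plus_sat_eq_0 y : -1 < k1 -> y + sat ub ul (k1 * y) = 0 -> y = 0.
Proof.
  intros Hk Hy. pose proof (Rmin_1_pos Hk). destruct (Rle_dec 0 y).
  - pose proof (id_plus_sat_ge y Hk r). nra.
  - pose proof (id_plus_sat_le y Hk ltac:(lra)). nra.
Qed.

Lemma id_plus_sat_ge_margin y : -1 < k1 -> 0 < y -> Rmin ub ul <= Rabs (k1 * y) ->
  Rmin 1 (1 + k1) * Rmin ub ul / (Rabs k1 + 1) <= y + sat ub ul (k1 * y).
Proof.
  intros Hk Hy Hm. pose proof (id_plus_sat_ge y Hk ltac:(lra)). pose proof (Rmin_1_pos Hk).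
  pose proof (Rabs_pos k1). rewrite Rabs_mult, (Rabs_pos_eq y) in Hm by lra.
  apply (Rmult_le_reg_r (Rabs k1 + 1)); [lra |].
  replace (Rmin 1 (1 + k1) * Rmin ub ul / (Rabs k1 + 1) * (Rabs k1 + 1))
    with (Rmin 1 (1 + k1) * Rmin ub ul) by (field; lra).
  assert (Rmin 1 (1 + k1) * Rmin ub ul <= Rmin 1 (1 + k1) * ((Rabs k1 + 1) * y))
    by (apply Rmult_le_compat_l; nra).
  nra.
Qed.

Lemma id_plus_sat_le_margin y : -1 < k1 -> y < 0 -> Rmin ub ul <= Rabs (k1 * y) ->
  y + sat ub ul (k1 * y) <= - (Rmin 1 (1 + k1) * Rmin ub ul / (Rabs k1 + 1)).
Proof.
  intros Hk Hy Hm. pose proof (id_plus_sat_le y Hk ltac:(lra)). pose proof (Rmin_1_pos Hk).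
  pose proof (Rabs_pos k1). rewrite Rabs_mult, (Rabs_left y) in Hm by lra.
  enough (Rmin 1 (1 + k1) * Rmin ub ul / (Rabs k1 + 1) <= - (y + sat ub ul (k1 * y))) by lra.
  apply (Rmult_le_reg_r (Rabs k1 + 1)); [lra |].
  replace (Rmin 1 (1 + k1) * Rmin ub ul / (Rabs k1 + 1) * (Rabs k1 + 1))
    with (Rmin 1 (1 + k1) * Rmin ub ul) by (field; lra).
  assert (Rmin 1 (1 + k1) * Rmin ub ul <= Rmin 1 (1 + k1) * ((Rabs k1 + 1) * - y))
    by (apply Rmult_le_compat_l; nra).
  nra.
Qed.

Section LevelSet.

Variables (z1 z2 : R -> R) (l : R).
Hypotheses (w_pos : 0 < w) (k1_gt : -1 < k1) (k2_pos : 0 < k2) (l_pos : 0 < l).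
Hypotheses (z_sol : is_solution w k1 k2 ub ul z1 z2) (z_level : forall s, lyap (z1 s) (z2 s) = l).

(* Along a level set of [lyap] the derivative [- w z2 (sat (k1 z1 + k2 z2) - sat (k1 z1))]
   vanishes, so the feedback only sees [k1 z1]. *)
Lemma level_sat_eq s : sat ub ul (k1 * z1 s + k2 * z2 s) = sat ub ul (k1 * z1 s).
Proof.
  assert (E : - w * z2 s * (sat ub ul (k1 * z1 s + k2 * z2 s) - sat ub ul (k1 * z1 s)) = 0).
  { pose proof (is_derive_unique _ _ _ (is_derive_lyap z1 z2 s z_sol)) as D1.
    assert (D2 : is_derive (fun s => lyap (z1 s) (z2 s)) s 0).
    { apply (is_derive_ext (fun _ => l)); [intros; symmetry; apply z_level | derive_rules]. }
    apply is_derive_unique in D2. congruence. }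
  destruct (Req_dec (z2 s) 0) as [Z | Z]; [now rewrite Z, Rmult_0_r, Rplus_0_r |].
  apply Rmult_integral in E. destruct E as [E | E]; [| lra].
  exfalso. apply Rmult_integral in E. destruct E; [lra | contradiction].
Qed.

Lemma level_is_derive_z2 s : is_derive z2 s (- w * (z1 s + sat ub ul (k1 * z1 s))).
Proof.
  destruct (z_sol s) as [_ D]. rewrite level_sat_eq in D.
  derive_as (- w * z1 s - w * sat ub ul (k1 * z1 s)). exact D.
Qed.

(* If the feedback were unsaturated near [s], the level-set identity would force [z2 = 0]
   near [s], hence [z1 s = 0] and [lyap (z1 s) (z2 s) = 0 < l]. *)
Lemma level_saturated s : Rmin ub ul <= Rabs (k1 * z1 s).
Proof.
  destruct (Rle_dec (Rmin ub ul) (Rabs (k1 * z1 s))) as [R | R]; [exact R |]. exfalso.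
  apply Rnot_le_lt in R. pose proof (Rabs_pos k1).
  set (e := (Rmin ub ul - Rabs (k1 * z1 s)) / (Rabs k1 + 1)).
  assert (He : 0 < e) by (apply Rdiv_lt_0_compat; lra).
  destruct (continuity_pt_eps z1 s (is_derive_continuity_pt _ _ _ (proj1 (z_sol s))) e He)
    as [d [Hd Hyd]].
  assert (Loc : forall y, Rabs (y - s) < d -> 0 = z2 y).
  { intros y Hy. specialize (Hyd y Hy).
    assert (Hb : Rabs (k1 * z1 y) < Rmin ub ul).
    { replace (k1 * z1 y) with (k1 * z1 s + k1 * (z1 y - z1 s)) by ring.
      eapply Rle_lt_trans; [apply Rabs_triang |]. rewrite (Rabs_mult k1 (z1 y - z1 s)).
      assert (Rabs k1 * Rabs (z1 y - z1 s) <= Rabs k1 * e) by (apply Rmult_le_compat_l; lra).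
      assert (Rabs k1 * e < Rmin ub ul - Rabs (k1 * z1 s)).
      { unfold e. apply (Rmult_lt_reg_r (Rabs k1 + 1)); [lra |].
        replace (Rabs k1 * ((Rmin ub ul - Rabs (k1 * z1 s)) / (Rabs k1 + 1)) * (Rabs k1 + 1))
          with (Rabs k1 * (Rmin ub ul - Rabs (k1 * z1 s))) by (field; lra). nra. }
      lra. }
    apply Rabs_def2 in Hb. pose proof (Rmin_l ub ul). pose proof (Rmin_r ub ul).
    pose proof (sat_eq_unsaturated (k1 * z1 y) (k1 * z1 y + k2 * z2 y) ltac:(lra) (level_sat_eq y)).
    assert (Hk2z : k2 * z2 y = 0) by lra.
    apply Rmult_integral in Hk2z. destruct Hk2z; lra. }
  assert (Dz : is_derive z2 s 0).
  { apply (is_derive_ext_loc (fun _ => 0) z2); [| derive_rules].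
    exists (mkposreal d Hd). intros y Hy. now apply Loc. }
  pose proof (is_derive_unique _ _ _ (level_is_derive_z2 s)) as E.
  rewrite (is_derive_unique _ _ _ Dz) in E. symmetry in E.
  assert (Z1 : z1 s = 0).
  { apply id_plus_sat_eq_0; [exact k1_gt |]. apply Rmult_integral in E. destruct E; lra. }
  assert (Z2 : z2 s = 0) by (symmetry; apply Loc; rewrite Rminus_diag, Rabs_R0; exact Hd).
  pose proof (z_level s) as Hl. rewrite Z1, Z2 in Hl. unfold lyap in Hl.
  rewrite sat_potential_0 in Hl. lra.
Qed.

Lemma level_z1_sign : (forall s, 0 <= s -> 0 < z1 s) \/ (forall s, 0 <= s -> z1 s < 0).
Proof.
  assert (Hnz : forall s, z1 s <> 0).
  { intros s E. pose proof (level_saturated s) as Hs. rewrite E, Rmult_0_r, Rabs_R0 in Hs.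
    pose proof (Rmin_pos _ _ ub_pos ul_pos). lra. }
  assert (Hcont : continuity z1) by (intros s; exact (is_derive_continuity_pt _ _ _ (proj1 (z_sol s)))).
  destruct (Rlt_dec 0 (z1 0)) as [P | P]; [left | right].
  - exact (pos_of_continuous_nonvanishing z1 Hcont Hnz P).
  - assert (N0 : 0 < - z1 0) by (pose proof (Hnz 0); lra).
    intros s Hs. enough (0 < - z1 s) by lra.
    exact (pos_of_continuous_nonvanishing (fun s => - z1 s) (continuity_opp _ Hcont)
             (fun s E => Hnz s ltac:(lra)) N0 s Hs).
Qed.

Lemma level_z2_bounded s : z2 s * z2 s <= 2 * l.
Proof.
  pose proof (z_level s) as Hl. unfold lyap in Hl. pose proof (Rmin_1_pos k1_gt).
  pose proof (sat_potential_ge (z1 s) k1_gt). pose proof (Rle_0_sqr (z1 s)). unfold Rsqr in *.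
  nra.
Qed.

(* [z2' = - w (z1 + sat (k1 z1))] has the sign of [- z1] and stays away from 0. *)
Lemma level_z2_drift S : 0 <= S ->
  w * (Rmin 1 (1 + k1) * Rmin ub ul / (Rabs k1 + 1)) * S <= Rabs (z2 S - z2 0).
Proof.
  intros HS. set (d := w * (Rmin 1 (1 + k1) * Rmin ub ul / (Rabs k1 + 1))).
  destruct level_z1_sign as [Pos | Neg].
  - enough (z2 S + d * S <= z2 0 + d * 0) by (pose proof (Rabs_maj2 (z2 S - z2 0)); lra).
    apply (le_of_is_derive_nonpos (fun u => z2 u + d * u)
      (fun u => - w * (z1 u + sat ub ul (k1 * z1 u)) + d)); [exact HS | |].
    + intros x _. pose proof (level_is_derive_z2 x).
      derive_as (- w * (z1 x + sat ub ul (k1 * z1 x)) + d * 1). derive_rules.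
    + intros x Hx. pose proof (id_plus_sat_ge_margin (z1 x) k1_gt (Pos x ltac:(lra)) (level_saturated x)).
      unfold d. nra.
  - enough (z2 0 - d * 0 <= z2 S - d * S) by (pose proof (RRle_abs (z2 S - z2 0)); lra).
    apply (le_of_is_derive_nonneg (fun u => z2 u - d * u)
      (fun u => - w * (z1 u + sat ub ul (k1 * z1 u)) - d)); [exact HS | |].
    + intros x _. pose proof (level_is_derive_z2 x).
      derive_as (- w * (z1 x + sat ub ul (k1 * z1 x)) - d * 1). derive_rules.
    + intros x Hx. pose proof (id_plus_sat_le_margin (z1 x) k1_gt (Neg x ltac:(lra)) (level_saturated x)).
      unfold d. nra.
Qed.

Lemma level_solution_absurd : False.
Proof.
  set (d := w * (Rmin 1 (1 + k1) * Rmin ub ul / (Rabs k1 + 1))).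
  pose proof (Rmin_1_pos k1_gt). pose proof (Rabs_pos k1). pose proof (Rmin_pos _ _ ub_pos ul_pos).
  assert (Hd : 0 < d) by (apply Rmult_lt_0_compat; [lra |]; apply Rdiv_lt_0_compat; nra).
  set (S := (Rabs (z2 0) + 2 * l + 2) / d).
  assert (HS : 0 <= S) by (apply Rdiv_le_0_compat; [pose proof (Rabs_pos (z2 0)) |]; lra).
  assert (HSd : d * S = Rabs (z2 0) + 2 * l + 2) by (unfold S; field; lra).
  pose proof (level_z2_drift S HS) as Hdrift. fold d in Hdrift.
  pose proof (Rabs_triang (z2 S) (- z2 0)) as Ht. rewrite Rabs_Ropp in Ht.
  assert (Hbig : 2 * l + 2 <= Rabs (z2 S)) by (unfold Rminus in Hdrift; lra).
  pose proof (level_z2_bounded S). pose proof (Rabs_mult_self (z2 S)).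
  nra.
Qed.

End LevelSet.

Lemma attractive x1 x2 : 0 < w -> -1 < k1 -> 0 < k2 -> is_solution w k1 k2 ub ul x1 x2 ->
  is_lim x1 p_infty 0 /\ is_lim x2 p_infty 0.
Proof.
  intros Hw Hk1 Hk2 Hx.
  destruct (lyap_limit x1 x2 Hw Hk1 ltac:(lra) Hx) as [l [Hl0 [Hlb Hev]]].
  destruct (Req_dec l 0) as [-> | Hl].
  { apply is_lim_of_lyap_to_0; [exact Hk1 |]. intros eps He. destruct (Hev eps He) as [T HT].
    exists T. intros t Ht. specialize (HT t Ht). lra. }
  exfalso. set (c := Rmin 1 (1 + k1)). assert (Hc : 0 < c) by now apply Rmin_1_pos.
  set (B := lyap (x1 0) (x2 0) * 2 / c).
  assert (Hbd : forall n : nat, Rabs (x1 (INR n)) <= B + 1 /\ Rabs (x2 (INR n)) <= B + 1).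
  { intros n. pose proof (lyap_ge (x1 (INR n)) (x2 (INR n)) Hk1) as Hge. fold c in Hge.
    pose proof (lyap_nonincreasing x1 x2 0 (INR n) Hw ltac:(lra) Hx (pos_INR n)).
    assert (Q : x1 (INR n) * x1 (INR n) + x2 (INR n) * x2 (INR n) <= B).
    { unfold B. apply (Rmult_le_reg_l (c / 2)); [lra |].
      replace (c / 2 * (lyap (x1 0) (x2 0) * 2 / c)) with (lyap (x1 0) (x2 0)) by (field; lra). lra. }
    pose proof (Rle_0_sqr (x1 (INR n))). pose proof (Rle_0_sqr (x2 (INR n))). unfold Rsqr in *.
    pose proof (Rabs_mult_self (x1 (INR n))). pose proof (Rabs_mult_self (x2 (INR n))).
    pose proof (Rabs_pos (x1 (INR n))). pose proof (Rabs_pos (x2 (INR n))).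
    split; nra. }
  destruct (bounded_seq2_cluster_point _ _ _ Hbd) as [p [q Hpq]].
  destruct (is_solution_exists p q) as [z1 [z2 [Hz1 [Hz2 Hz]]]].
  apply (level_solution_absurd z1 z2 l); auto; [lra |].
  exact (lyap_const_on_omega_limit x1 x2 z1 z2 l p q Hx Hz Hz1 Hz2 Hlb Hev Hpq).
Qed.

Lemma norm2_lt_iff a b e : 0 < e -> (norm2 a b < e <-> a * a + b * b < e * e).
Proof.
  intros He. unfold norm2. rewrite <- (sqrt_square e) at 1 by lra. simpl. rewrite !Rmult_1_r.
  pose proof (Rle_0_sqr a). pose proof (Rle_0_sqr b). unfold Rsqr in *.
  split; [apply sqrt_lt_0_alt | intros; apply sqrt_lt_1_alt; lra].
Qed.

Lemma lyapunov_stable : 0 < w -> -1 < k1 -> 0 <= k2 ->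
  forall eps : R, 0 < eps -> exists delta : R, 0 < delta /\
    forall x1 x2 : R -> R, is_solution w k1 k2 ub ul x1 x2 ->
      norm2 (x1 0) (x2 0) < delta -> forall t : R, 0 <= t -> norm2 (x1 t) (x2 t) < eps.
Proof.
  intros Hw Hk1 Hk2 eps He.
  set (c := Rmin 1 (1 + k1)). assert (Hc : 0 < c) by now apply Rmin_1_pos.
  pose proof (Rabs_pos k1). pose proof (Rmin_l 1 (1 + k1)) as Hc1. fold c in Hc1.
  (* [c / 2 |x|^2 <= lyap x <= (1 + |k1|) / 2 |x|^2] and [lyap] decreases *)
  set (r := c / (1 + Rabs k1)).
  assert (Hcr : c = r * (1 + Rabs k1)) by (unfold r; field; lra).
  assert (Hr : 0 < r <= 1) by (split; nra).
  exists (eps * r). split; [nra |].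
  intros x1 x2 Hx Hx0 t Ht. apply norm2_lt_iff; [exact He |]. apply norm2_lt_iff in Hx0; [| nra].
  pose proof (lyap_ge (x1 t) (x2 t) Hk1) as Hge. fold c in Hge.
  pose proof (lyap_le (x1 0) (x2 0)).
  pose proof (lyap_nonincreasing x1 x2 0 t Hw Hk2 Hx Ht).
  assert (Hsum : c * (x1 t * x1 t + x2 t * x2 t) <= (1 + Rabs k1) * (x1 0 * x1 0 + x2 0 * x2 0)) by lra.
  rewrite Hcr in Hsum.
  assert (Hsum' : r * (x1 t * x1 t + x2 t * x2 t) <= x1 0 * x1 0 + x2 0 * x2 0).
  { apply (Rmult_le_reg_r (1 + Rabs k1)); [lra |]. lra. }
  assert (r * (x1 t * x1 t + x2 t * x2 t) < r * (eps * eps)) by nra.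
  apply (Rmult_lt_reg_l r); lra.
Qed.

Lemma equilibrium_of_k1_le : k1 <= -1 -> is_solution w k1 k2 ub ul (fun _ => ul) (fun _ => 0).
Proof.
  intros Hk t.
  assert (S : sat ub ul (k1 * ul + k2 * 0) = - ul).
  { rewrite Rmult_0_r, Rplus_0_r. assert (k1 * ul <= - ul) by nra. unfold sat, Rmin, Rmax.
    repeat destruct Rle_dec; lra. }
  cbv beta. split; [derive_as 0 | rewrite S; derive_as 0]; derive_rules.
Qed.

Lemma not_attractive_of_k2_nonpos : 0 < w -> k2 <= 0 ->
  ~ (forall x1 x2, is_solution w k1 k2 ub ul x1 x2 -> is_lim x1 p_infty 0 /\ is_lim x2 p_infty 0).
Proof.
  intros Hw Hk2 Hat.
  destruct (is_solution_exists 0 1) as [x1 [x2 [H1 [H2 Hx]]]].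
  destruct (Hat x1 x2 Hx) as [L1 L2].
  pose proof (Rabs_pos k1).
  set (eta := / (2 * (1 + Rabs k1))).
  assert (Heta : 0 < eta) by (apply Rinv_0_lt_compat; lra).
  destruct (proj1 (is_lim_pinfty_0_iff x1) L1 eta Heta) as [T1 HT1].
  destruct (proj1 (is_lim_pinfty_0_iff x2) L2 eta Heta) as [T2 HT2].
  set (t := Rabs T1 + Rabs T2 + 1).
  pose proof (RRle_abs T1). pose proof (RRle_abs T2). pose proof (Rabs_pos T1). pose proof (Rabs_pos T2).
  specialize (HT1 t ltac:(unfold t; lra)). specialize (HT2 t ltac:(unfold t; lra)).
  (* [lyap] starts at [1/2] and never decreases, but [x t] is small *)
  pose proof (lyap_nondecreasing x1 x2 0 t Hw Hk2 Hx ltac:(unfold t; lra)) as M.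
  rewrite H1, H2 in M. unfold lyap at 1 in M. rewrite sat_potential_0 in M.
  pose proof (lyap_le (x1 t) (x2 t)).
  pose proof (Rabs_mult_self (x1 t)). pose proof (Rabs_mult_self (x2 t)).
  pose proof (Rabs_pos (x1 t)). pose proof (Rabs_pos (x2 t)).
  assert (x1 t * x1 t + x2 t * x2 t < 2 * (eta * eta)) by nra.
  assert (E : (1 + Rabs k1) * (eta * eta) = eta / 2) by (unfold eta; field; lra).
  assert (Eb : eta <= 1 / 2).
  { unfold eta. apply (Rmult_le_reg_r (2 * (1 + Rabs k1))); [lra |].
    rewrite Rinv_l by lra. nra. }
  assert ((1 + Rabs k1) / 2 * (x1 t * x1 t + x2 t * x2 t) <= (1 + Rabs k1) / 2 * (2 * (eta * eta)))
    by (apply Rmult_le_compat_l; lra).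
  nra.
Qed.

End Oscillator.

Theorem proposition3 (w k1 k2 ubar ulow : R) (hw : 0 < w)
  (hub : 0 < ubar) (hul : 0 < ulow) :
  GAS w k1 k2 ubar ulow <-> (k1 > -1 /\ k2 > 0).
Proof.
  split.
  - intros [_ Hat]. split.
    + destruct (Rlt_dec (-1) k1) as [| Hk1]; [lra | exfalso].
      destruct (Hat _ _ (equilibrium_of_k1_le w k1 k2 ubar ulow hub hul ltac:(lra))) as [L1 _].
      apply is_lim_unique in L1. rewrite Lim_const in L1. injection L1. lra.
    + destruct (Rlt_dec 0 k2) as [| Hk2]; [lra | exfalso].
      exact (not_attractive_of_k2_nonpos w k1 k2 ubar ulow hub hul hw ltac:(lra) Hat).
  - intros [Hk1 Hk2]. split.
    + apply lyapunov_stable; auto; lra.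
    + intros x1 x2 Hx. apply (attractive w k1 k2 ubar ulow hub hul); auto.
Qed.
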